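(* Assume that we estimate the Shapley effects with the random-permutation $W$-aggregation procedure, where each $\widehat W_u(m)$ is computed with cost $\kappa N_{|u|}$ as $\widehat W_u(m)=\frac1{N_{|u|}}\sum_{n=1}^{N_{|u|}}\widehat W_u^{(n)}(m)$ with i.i.d. $(\widehat W_u^{(n)}(m))_n$ and with all $(\widehat W_u(m))_{u,m}$ independent, and that the variances $(\mathrm{Var}(\widehat W_u^{(1)}(1)))_{\emptyset\subsetneq u\subsetneq[1:p]}$ are all equal. Then the solution of $$\min_{(N_k)_{k\in[1:p-1]}\in(0,+\infty)^{p-1}}\mathrm{E}\Big[\sum_{i=1}^p\mathrm{Var}\big(\widehat\eta_i\,\big|\,(\sigma_m)_{m\in[1:M]}\big)\Big]\quad\text{subject to}\quad\kappa M\sum_{k=1}^{p-1}N_k=\kappa MN_O(p-1)$$ is $N_k^{**}=N_O$ for all $k\in[1:p-1]$.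
   Context: Setting: $\mathbf{X}=(X_1,\dots,X_p)$, $Y=f(\mathbf{X})$, $f\in L^2(\mathbb{P}_\mathbf{X})$; $W_u$ is $V_u=\mathrm{Var}(\mathrm{E}(Y|\mathbf{X}_u))$ or $E_u=\mathrm{E}(\mathrm{Var}(Y|\mathbf{X}_{-u}))$, with $W_\emptyset=0$, $W_{[1:p]}=\mathrm{Var}(Y)$ known. For a permutation $\sigma$ of $[1:p]$ and $i\in[1:p]$, $P_i(\sigma)=\{\sigma(j):j\in[1:\sigma^{-1}(i)-1]\}$. Random-permutation $W$-aggregation procedure: draw $\sigma_1,\dots,\sigma_M$ i.i.d. uniform permutations; for each $m$ and each $u$ of the form $P_{\sigma_m(j)}(\sigma_m)\cup\{\sigma_m(j)\}$ compute one estimate $\widehat W_u(m)$ (used both for the increment of $\sigma_m(j)$ and as the ''previous'' term for $\sigma_m(j+1)$); then $\widehat\eta_i=\frac{1}{M\mathrm{Var}(Y)}\sum_{m=1}^M(\widehat W_{P_i(\sigma_m)\cup\{i\}}(m)-\widehat W_{P_i(\sigma_m)}(m))$. The accuracy $N_u$ of $\widehat W_u(m)$ is required to depend only on $|u|$, written $N_{|u|}$, and the total cost $\kappa M\sum_{k=1}^{p-1}N_k$ is set to $\kappa MN_O(p-1)$ for a fixed $N_O\in\mathbb{N}^*$. *)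

From mathcomp Require Import all_boot all_order all_algebra all_fingroup.
From mathcomp Require Import reals.
Set Implicit Arguments. Unset Strict Implicit. Unset Printing Implicit Defensive.
Import Order.TTheory GRing.Theory Num.Theory.
Local Open Scope ring_scope.

(* P_i(sigma) = { sigma(j) : j < sigma^{-1}(i) }  (positions are 0-based) *)
Definition Pred_set (p : nat) (sigma : {perm 'I_p}) (i : 'I_p) : {set 'I_p} :=
  [set sigma j | j : 'I_p & (j < (sigma^-1)%g i)%N].

(* Var(\hat W_u(m)) = Var(\hat W_u^{(1)}(1)) / N_{|u|} for emptyset <> u <> [1:p];
   W_emptyset = 0 and W_[1:p] = Var(Y) are known, hence have zero variance. *)
Definition varWhat (R : realType) (p : nat) (N : nat -> R)
    (v1 : {set 'I_p} -> R) (u : {set 'I_p}) : R :=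
  if (u == set0) || (u == setT) then 0 else v1 u / N #|u|.

(* Var(\hat eta_i | (sigma_m)_m), using the independence of all
   (\hat W_u(m))_{u,m}:  \hat eta_i = (1/(M VarY)) sum_m (W_{P u {i}}(m) - W_P(m)) *)
Definition condvar_eta (R : realType) (p M : nat) (VarY : R) (N : nat -> R)
    (v1 : {set 'I_p} -> R) (sig : {ffun 'I_M -> {perm 'I_p}}) (i : 'I_p) : R :=
  (M%:R * VarY) ^- 2 *
  \sum_(m < M) (varWhat N v1 (i |: Pred_set (sig m) i)
                + varWhat N v1 (Pred_set (sig m) i)).

(* E[ sum_i Var(\hat eta_i | (sigma_m)_m) ], sigma_1..sigma_M iid uniform *)
Definition objective (R : realType) (p M : nat) (VarY : R) (N : nat -> R)
    (v1 : {set 'I_p} -> R) : R :=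
  (#|{ffun 'I_M -> {perm 'I_p}}|%:R)^-1 *
  \sum_(sig : {ffun 'I_M -> {perm 'I_p}}) \sum_(i < p) condvar_eta VarY N v1 sig i.

Definition admissible (R : realType) (p M NO : nat) (kappa : R) (N : nat -> R) : Prop :=
  (forall k, (1 <= k <= p.-1)%N -> 0 < N k) /\
  kappa * M%:R * (\sum_(1 <= k < p) N k) = kappa * M%:R * NO%:R * (p.-1)%:R.

(* With equal variances, Var(W_u(m)) only depends on |u| (through 1/N_|u|, and
   vanishes for |u| = 0 or p).  Along any permutation, the element at position
   j contributes the sets P_i(sigma) and P_i(sigma) u {i} of sizes j and j+1,
   so for every draw of the permutations the objective equals a positive
   constant times sum_{k=1}^{p-1} 1/N_k.  Under the budget sum_k N_k = (p-1) N_O,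
   summing 1/x - 1/a + (x - a)/a^2 = (x - a)^2/(a^2 x) >= 0 over x = N_k,
   a = N_O gives sum_k 1/N_k >= (p-1)/N_O, with equality iff every N_k = N_O. *)

From mathcomp Require Import all_boot all_order all_algebra all_fingroup.
From mathcomp Require Import reals.
From mathcomp Require Import zify ring.
Import Order.TTheory GRing.Theory Num.Theory.
Local Open Scope ring_scope.

Lemma card_ord_lt (p k : nat) : (k <= p)%N -> #|[set j : 'I_p | (j < k)%N]| = k.
Proof.
move=> le_kp; have widen_inj : injective (widen_ord le_kp) by move=> j l [] /val_inj.
rewrite -[RHS]card_ord -(card_imset _ widen_inj); apply: eq_card => j.
rewrite inE; apply/idP/imsetP => [lt_jk | [l _ ->]]; last by case: l.
by exists (Ordinal lt_jk) => //; apply: val_inj.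
Qed.

Lemma eqT_card_ord (p : nat) (u : {set 'I_p}) : (u == setT) = (#|u| == p).
Proof.
by have := max_card u; rewrite eqEcard subsetT cardsT card_ord eqn_leq => ->.
Qed.

Section PredSet.
Variables (p : nat) (s : {perm 'I_p}) (i : 'I_p).

Lemma card_Pred_set : #|Pred_set s i| = (s^-1)%g i.
Proof. by rewrite card_imset ?card_ord_lt 1?ltnW //; exact: perm_inj. Qed.

Lemma Pred_setNi : i \notin Pred_set s i.
Proof.
by apply/imsetP => -[j]; rewrite inE => lt_j i_eq; rewrite i_eq permK ltnn in lt_j.
Qed.

Lemma card_setU1_Pred_set : #|i |: Pred_set s i| = ((s^-1)%g i).+1.
Proof. by rewrite cardsU1 Pred_setNi card_Pred_set. Qed.

End PredSet.

Lemma sum_adjacent_pairs (V : zmodType) (f : nat -> V) (n : nat) :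
  f 0%N = 0 -> f n = 0 ->
  \sum_(j < n) (f j.+1 + f j) = (\sum_(1 <= k < n) f k) *+ 2.
Proof.
move=> f0; case: n => [_|n fn]; first by rewrite big_ord0 big_geq ?mul0rn.
rewrite big_split /= big_ord_recr big_ord_recl /= fn f0 addr0 add0r.
by rewrite big_add1 big_mkord mulr2n.
Qed.

Lemma invr_sub_tangent (F : fieldType) (x a : F) : x != 0 -> a != 0 ->
  x^-1 - a^-1 + (x - a) / a ^+ 2 = (x - a) ^+ 2 / (a ^+ 2 * x).
Proof. by move=> x_neq0 a_neq0; field; rewrite x_neq0 a_neq0. Qed.

Section InverseSumBound.
Context {R : realFieldType} {I : eqType} {r : seq I} {x : I -> R} {a : R}.
Hypotheses (a_gt0 : 0 < a) (x_gt0 : forall i, i \in r -> 0 < x i).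
Hypothesis sum_x : \sum_(i <- r) x i = a * (size r)%:R.

Lemma tangent_gap_ge0 i : i \in r -> 0 <= (x i - a) ^+ 2 / (a ^+ 2 * x i).
Proof.
by move=> /x_gt0 xi_gt0; rewrite divr_ge0 ?sqr_ge0 // ltW // mulr_gt0 ?exprn_gt0.
Qed.

Lemma sum_inv_sub_mean :
  \sum_(i <- r) (x i)^-1 - (size r)%:R / a =
  \sum_(i <- r) (x i - a) ^+ 2 / (a ^+ 2 * x i).
Proof.
rewrite [RHS]big_seq.
under eq_bigr => i /x_gt0 xi_gt0 do rewrite -invr_sub_tangent ?gt_eqF //.
rewrite -big_seq !big_split /= -[X in _ = _ + X]mulr_suml sumrB sum_x sumrN.
rewrite !big_const_seq count_predT !iter_addr_0.
by field; rewrite gt_eqF.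
Qed.

Lemma sum_inv_ge_mean : (size r)%:R / a <= \sum_(i <- r) (x i)^-1.
Proof.
by rewrite -subr_ge0 sum_inv_sub_mean big_seq sumr_ge0 // => i; apply: tangent_gap_ge0.
Qed.

Lemma sum_inv_eq_mean :
  \sum_(i <- r) (x i)^-1 = (size r)%:R / a -> forall i, i \in r -> x i = a.
Proof.
move/eqP; rewrite -subr_eq0 sum_inv_sub_mean big_seq psumr_eq0; last first.
  exact: tangent_gap_ge0.
move=> /allP gap_eq0 i ri; move: (gap_eq0 i ri); rewrite ri /=.
rewrite mulf_eq0 sqrf_eq0 invr_eq0 mulf_eq0 expf_eq0 (gt_eqF a_gt0) (gt_eqF (x_gt0 i ri)).
by rewrite andbF !orbF subr_eq0 => /eqP.
Qed.

End InverseSumBound.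

Section EqualVariances.
Context {R : realType} {p : nat} {s2 : R} (N : nat -> R) {v1 : {set 'I_p} -> R}.
Hypothesis v1_const : forall u : {set 'I_p}, u != set0 -> u != setT -> v1 u = s2.

Definition var_of_size (k : nat) : R := if (k == 0%N) || (k == p) then 0 else s2 / N k.

Lemma varWhat_card u : varWhat N v1 u = var_of_size #|u|.
Proof.
rewrite /varWhat /var_of_size cards_eq0 -eqT_card_ord.
by case: ifP => // /norP[u_neq0 u_neqT]; rewrite v1_const.
Qed.

Lemma sum_var_of_size :
  \sum_(1 <= k < p) var_of_size k = s2 * \sum_(1 <= k < p) (N k)^-1.
Proof.
rewrite mulr_sumr !big_nat; apply: eq_bigr => k /andP[k_gt0 k_ltp].
by rewrite /var_of_size gtn_eqF // ltn_eqF.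
Qed.

Lemma sum_varWhat_perm (s : {perm 'I_p}) :
  \sum_(i < p) (varWhat N v1 (i |: Pred_set s i) + varWhat N v1 (Pred_set s i)) =
  (s2 * \sum_(1 <= k < p) (N k)^-1) *+ 2.
Proof.
rewrite (reindex_inj (@perm_inj _ s)) -sum_var_of_size -sum_adjacent_pairs; last 2 first.
- by rewrite /var_of_size eqxx.
- by rewrite /var_of_size eqxx orbT.
by apply: eq_bigr => j _; rewrite !varWhat_card card_setU1_Pred_set card_Pred_set permK.
Qed.

Lemma objectiveE (M : nat) (VarY : R) :
  objective M VarY N v1 =
  ((M%:R * VarY) ^- 2 * s2) *+ (2 * M) * \sum_(1 <= k < p) (N k)^-1.
Proof.
have sum_condvar (sig : {ffun 'I_M -> {perm 'I_p}}) :
    \sum_(i < p) condvar_eta VarY N v1 sig i =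
    ((M%:R * VarY) ^- 2 * s2) *+ (2 * M) * \sum_(1 <= k < p) (N k)^-1.
  rewrite /condvar_eta -mulr_sumr exchange_big /=.
  under eq_bigr do rewrite sum_varWhat_perm.
  by rewrite sumr_const card_ord -mulrnA mulrnAr [RHS]mulrnAl mulrA.
rewrite /objective (eq_bigr _ (fun sig _ => sum_condvar sig)) sumr_const.
rewrite -[X in _ * X]mulr_natl mulKf //.
by rewrite pnatr_eq0 -lt0n; apply/card_gt0P; exists [ffun=> 1%g].
Qed.

End EqualVariances.

Theorem proposition5 (R : realType) (p M NO : nat) (kappa VarY s2 : R)
    (v1 : {set 'I_p} -> R) :
  (2 <= p)%N -> (0 < M)%N -> (0 < NO)%N -> 0 < kappa -> 0 < VarY -> 0 < s2 ->
  (forall u : {set 'I_p}, u != set0 -> u != setT -> v1 u = s2) ->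
  let Nstar := fun _ : nat => (NO%:R : R) in
  admissible p M NO kappa Nstar /\
  forall N : nat -> R, admissible p M NO kappa N ->
    objective M VarY Nstar v1 <= objective M VarY N v1 /\
    (objective M VarY N v1 = objective M VarY Nstar v1 ->
       forall k, (1 <= k <= p.-1)%N -> N k = NO%:R).
Proof.
move=> _ M_gt0 NO_gt0 kappa_gt0 VarY_gt0 s2_gt0 v1_const Nstar.
pose K := ((M%:R * VarY) ^- 2 * s2) *+ (2 * M).
have K_gt0 : 0 < K.
  by rewrite pmulrn_lgt0 ?muln_gt0 // mulr_gt0 // invr_gt0 exprn_gt0 // mulr_gt0 // ltr0n.
have NO_pos : 0 < NO%:R :> R by rewrite ltr0n.
have size_range : size (index_iota 1 p) = p.-1 by rewrite size_iota subn1.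
have obj_Nstar : objective M VarY Nstar v1 = K * ((p.-1)%:R / NO%:R).
  by rewrite (objectiveE _ v1_const) -/K /Nstar sumr_const_nat subn1 mulr_natl.
split.
  split => [k _|]; first exact: NO_pos.
  by rewrite /Nstar sumr_const_nat subn1 -[RHS]mulrA [NO%:R * _]mulr_natr.
move=> N [N_gt0 budget].
have N_range_gt0 k : k \in index_iota 1 p -> 0 < N k.
  by rewrite mem_index_iota => k_range; apply: N_gt0; lia.
have sum_N : \sum_(k <- index_iota 1 p) N k = NO%:R * (size (index_iota 1 p))%:R.
  apply: (@mulfI _ (kappa * M%:R)); first by rewrite mulf_neq0 ?gt_eqF ?ltr0n.
  by rewrite size_range mulrA budget.
rewrite obj_Nstar (objectiveE _ v1_const) -/K -size_range; split.
  by rewrite ler_pM2l // sum_inv_ge_mean.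
move=> /(mulfI (lt0r_neq0 K_gt0)) sum_inv_eq k k_range.
apply: (sum_inv_eq_mean NO_pos N_range_gt0 sum_N sum_inv_eq).
by rewrite mem_index_iota; lia.
Qed.
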